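(* Let $a,b>0$ and consider the symmetric Rock-Paper-Scissors game with payoff matrix $$A=\begin{pmatrix}0&-a&b\\ b&0&-a\\ -a&b&0\end{pmatrix}.$$ Writing $(x,y,z)$ for the shares of strategies 1, 2, 3, the IBR dynamics for $A$ is $$\dot x=x(z-y)(1-xy-xz-yz),\quad \dot y=y(x-z)(1-xy-xz-yz),\quad \dot z=z(y-x)(1-xy-xz-yz).$$ Its unique rest point in the interior of $\Delta$ is $(\tfrac13,\tfrac13,\tfrac13)$, and every solution starting in the interior of $\Delta$ at a state other than $(\tfrac13,\tfrac13,\tfrac13)$ is a closed orbit (a nonconstant periodic solution) around $(\tfrac13,\tfrac13,\tfrac13)$.
   Context: Let $n\ge 2$ and consider a symmetric two-player game with strategy set $S=\{1,\dots,n\}$ and payoff matrix $A=(\pi_{ij})_{i,j\in S}$, where $\pi_{ij}\in\mathbb{R}$ is the payoff of a player using strategy $i$ against an opponent using strategy $j$. The state space is the simplex $\Delta=\{x\in\mathbb{R}^n: x_i\ge 0,\ \sum_i x_i=1\}$, where $x_i$ is the population share using strategy $i$. The imitate-the-better-realization (IBR) dynamics is the ODE on $\Delta$ $$\dot x_i = x_i\sum_{j=1}^n\sum_{k=1}^n\sum_{m=1}^n x_jx_kx_m\big(\mathbf 1\{\pi_{jk}<\pi_{im}\}-\mathbf 1\{\pi_{jk}>\pi_{im}\}\big),\quad i\in S.$$ Here $n=3$. *)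

From Stdlib Require Import Reals Lra.
Open Scope R_scope.

Fixpoint rsum (n : nat) (f : nat -> R) : R :=
  match n with
  | O => 0
  | S n' => rsum n' f + f n'
  end.

Definition cmp_sign (p q : R) : R :=
  (if Rlt_dec p q then 1 else 0) - (if Rlt_dec q p then 1 else 0).

(* IBR vector field for n strategies (indexed 0..n-1) and payoff pi;
   states are x : nat -> R (only indices < n matter). *)
Definition ibr (n : nat) (pi : nat -> nat -> R) (x : nat -> R) (i : nat) : R :=
  x i * rsum n (fun j => rsum n (fun k => rsum n (fun m =>
          x j * x k * x m * cmp_sign (pi j k) (pi i m)))).

(* Rock-Paper-Scissors payoff matrix, strategies 1,2,3 indexed 0,1,2. *)
Definition rps (a b : R) (i j : nat) : R :=
  match i, j with
  | 0%nat, 0%nat => 0 | 0%nat, 1%nat => - a | 0%nat, 2%nat => b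
  | 1%nat, 0%nat => b | 1%nat, 1%nat => 0 | 1%nat, 2%nat => - a
  | 2%nat, 0%nat => - a | 2%nat, 1%nat => b | 2%nat, 2%nat => 0
  | _, _ => 0
  end.

Definition in_simplex3 (x : nat -> R) : Prop :=
  0 <= x 0%nat /\ 0 <= x 1%nat /\ 0 <= x 2%nat /\ x 0%nat + x 1%nat + x 2%nat = 1.
Definition in_interior3 (x : nat -> R) : Prop :=
  0 < x 0%nat /\ 0 < x 1%nat /\ 0 < x 2%nat /\ x 0%nat + x 1%nat + x 2%nat = 1.

Definition is_center3 (x : nat -> R) : Prop :=
  x 0%nat = 1/3 /\ x 1%nat = 1/3 /\ x 2%nat = 1/3.

Definition is_solution3 (F : (nat -> R) -> nat -> R) (phi : R -> nat -> R) : Prop :=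
  forall (t : R) (i : nat), (i < 3)%nat ->
    derivable_pt_lim (fun s => phi s i) t (F (phi t) i).

From Stdlib Require Import Reals Lra Psatz Classical.
From Coquelicot Require Import Coquelicot.
Open Scope R_scope.

(* Since -a < 0 < b, every payoff comparison in the IBR sum has a fixed sign,
   so on R^3 the field is the polynomial x_i (x_{i-1} - x_{i+1}) Q(x) with
   Q = x^2 + y^2 + z^2 + xy + yz + zx, which equals 1 - xy - xz - yz on the
   simplex and is >= 2/3 there; this gives the explicit form and the unique
   interior rest point.  The dynamics conserves x + y + z and xyz.

   Clamping the coordinates to [0,1] makes the RPS
   field globally Lipschitz; its solutions from the open simplex never leave
   it (xyz is conserved), giving existence.  Periodicity: in the centered
   coordinates (3x - 1, y - z) the angular velocity is at least xyz / 3, so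
   the state returns to its initial ray from the barycenter in finite time
   T; on that ray xyz is injective, so the state at time T is the initial
   one, and uniqueness makes the solution T-periodic.  A constant solution
   would sit at a rest point, i.e. at the barycenter. *)

Lemma deriv_plus f g x df dg : derivable_pt_lim f x df -> derivable_pt_lim g x dg ->
  derivable_pt_lim (fun t => f t + g t) x (df + dg).
Proof. rewrite <- !is_derive_Reals. exact (is_derive_plus f g x df dg). Qed.

Lemma deriv_minus f g x df dg : derivable_pt_lim f x df -> derivable_pt_lim g x dg ->
  derivable_pt_lim (fun t => f t - g t) x (df - dg).
Proof. rewrite <- !is_derive_Reals. exact (is_derive_minus f g x df dg). Qed.

Lemma deriv_mult f g x df dg : derivable_pt_lim f x df -> derivable_pt_lim g x dg ->
  derivable_pt_lim (fun t => f t * g t) x (df * g x + f x * dg).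
Proof. rewrite <- !is_derive_Reals. intros h1 h2. exact (is_derive_mult f g x df dg h1 h2 Rmult_comm). Qed.

Lemma deriv_div f g x df dg : derivable_pt_lim f x df -> derivable_pt_lim g x dg -> g x <> 0 ->
  derivable_pt_lim (fun t => f t / g t) x ((df * g x - f x * dg) / g x ^ 2).
Proof. rewrite <- !is_derive_Reals. exact (is_derive_div f g x df dg). Qed.

Lemma deriv_comp h g x dh dg : derivable_pt_lim h (g x) dh -> derivable_pt_lim g x dg ->
  derivable_pt_lim (fun t => h (g t)) x (dg * dh).
Proof. rewrite <- !is_derive_Reals. exact (is_derive_comp h g x dh dg). Qed.

Lemma deriv_const c x : derivable_pt_lim (fun _ => c) x 0.
Proof. rewrite <- is_derive_Reals. exact (is_derive_const c x). Qed.

Lemma deriv_id x : derivable_pt_lim (fun t => t) x 1.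
Proof. rewrite <- is_derive_Reals. exact (is_derive_id x). Qed.

Lemma deriv_eq f x l l' : derivable_pt_lim f x l -> l = l' -> derivable_pt_lim f x l'.
Proof. now intros h <-. Qed.

Lemma deriv_ext f g x l : (forall t, f t = g t) -> derivable_pt_lim f x l -> derivable_pt_lim g x l.
Proof. rewrite <- !is_derive_Reals. exact (is_derive_ext f g x l). Qed.

Lemma deriv_continuity_pt f x l : derivable_pt_lim f x l -> continuity_pt f x.
Proof.
  intro h. apply continuity_pt_filterlim, (@ex_derive_continuous R_AbsRing R_NormedModule).
  exists l. now apply is_derive_Reals.
Qed.

Lemma deriv_continuous f x l : derivable_pt_lim f x l -> continuous f x.
Proof. intro h. apply continuity_pt_filterlim. exact (deriv_continuity_pt f x l h). Qed.

Lemma deriv_nonpos_nonincr f df : (forall t, derivable_pt_lim f t (df t)) ->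
  (forall t, df t <= 0) -> forall s t, s <= t -> f t <= f s.
Proof.
  intros hd hn s t hst.
  destruct (MVT_gen f s t df) as [c [_ e]].
  - intros x _. now apply is_derive_Reals.
  - intros x _. exact (deriv_continuity_pt f x _ (hd x)).
  - specialize (hn c). nra.
Qed.

Lemma deriv_zero_const f : (forall t, derivable_pt_lim f t 0) -> forall s t, f t = f s.
Proof.
  intros hd s t.
  destruct (MVT_gen f s t (fun _ => 0)) as [c [_ e]].
  - intros x _. now apply is_derive_Reals.
  - intros x _. exact (deriv_continuity_pt f x _ (hd x)).
  - lra.
Qed.

Lemma never_zero_stays_pos f : (forall t, continuity_pt f t) -> 0 < f 0 ->
  (forall t, f t <> 0) -> forall t, 0 < f t.
Proof.
  intros hc h0 hn t. destruct (Rlt_dec 0 (f t)) as [h|h]; auto. exfalso.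
  destruct (IVT_gen f 0 t 0 hc) as [x [_ hx]].
  - unfold Rmin, Rmax; destruct (Rle_dec (f 0) (f t)); lra.
  - exact (hn x hx).
Qed.

Lemma gronwall_forward u du K t0 : (forall t, derivable_pt_lim u t (du t)) ->
  (forall t, 0 <= u t) -> (forall t, du t <= K * u t) -> u t0 = 0 ->
  forall t, t0 <= t -> u t = 0.
Proof.
  intros hd hp hb h0 t ht.
  set (w := fun s => u s * exp (- K * s)).
  assert (hdw : forall s, derivable_pt_lim w s ((du s - K * u s) * exp (- K * s))).
  { intro s. eapply deriv_eq.
    - apply deriv_mult; [apply hd|].
      apply (deriv_comp exp (fun s => - K * s) s (exp (- K * s)) (- K)); [apply derivable_pt_lim_exp|].
      eapply deriv_eq; [apply deriv_mult; [apply deriv_const|apply deriv_id]|cbv beta; ring].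
    - cbv beta; ring. }
  assert (hdec := deriv_nonpos_nonincr w _ hdw).
  assert (hw : w t <= w t0).
  { apply hdec; auto. intro s. specialize (hb s). assert (0 < exp (- K * s)) by apply exp_pos. nra. }
  unfold w in hw. rewrite h0 in hw.
  assert (0 < exp (- K * t)) by apply exp_pos. specialize (hp t). nra.
Qed.

(* By time reversal, |u'| <= K u and u(t0) = 0 force u = 0 everywhere. *)
Lemma gronwall_zero u du K t0 : (forall t, derivable_pt_lim u t (du t)) ->
  (forall t, 0 <= u t) -> (forall t, Rabs (du t) <= K * u t) -> u t0 = 0 ->
  forall t, u t = 0.
Proof.
  intros hd hp hb h0 t.
  destruct (Rle_dec t0 t) as [ht|ht].
  - apply (gronwall_forward u du K t0); auto.
    intro s. specialize (hb s). apply Rabs_le_between in hb. lra.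
  - replace t with (- - t) by ring.
    apply (gronwall_forward (fun s => u (- s)) (fun s => - du (- s)) K (- t0)); auto; try lra.
    + intro s. eapply deriv_eq.
      * apply (deriv_comp u (fun s => - s) s (du (- s)) (-1)); [apply hd|].
        apply (deriv_ext (fun s => 0 - s)); [intro; ring|].
        eapply deriv_eq; [apply deriv_minus; [apply deriv_const|apply deriv_id]|cbv beta; ring].
      * ring.
    + intro s. specialize (hb (- s)). apply Rabs_le_between in hb. lra.
    + now rewrite Ropp_involutive.
Qed.

Lemma continuous_ex_RInt (g : R -> R) a b : (forall s, continuous g s) -> ex_RInt g a b.
Proof. intro h. apply (@ex_RInt_continuous R_CompleteNormedModule). intros; auto. Qed.

Lemma RInt_deriv (g : R -> R) t : (forall s, continuous g s) ->
  derivable_pt_lim (fun t => RInt g 0 t) t (g t).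
Proof.
  intros hg. apply is_derive_Reals, (is_derive_RInt g (fun t => RInt g 0 t) 0 t); auto.
  apply filter_forall. intro. apply (@RInt_correct R_CompleteNormedModule).
  now apply continuous_ex_RInt.
Qed.

Lemma lipschitz_continuous (g : R -> R) C : 0 <= C ->
  (forall s s', Rabs (g s - g s') <= C * Rabs (s - s')) -> forall t, continuous g t.
Proof.
  intros hC hl t. apply continuity_pt_filterlim.
  intros eps he. exists (eps / (C + 1)). split.
  - apply Rdiv_lt_0_compat; lra.
  - intros x [_ hx]. simpl in *. unfold R_dist in *.
    eapply Rle_lt_trans; [apply hl|].
    assert (0 <= Rabs (x - t)) by apply Rabs_pos.
    apply (Rmult_lt_compat_r (C + 1)) in hx; [|lra].
    unfold Rdiv in hx. rewrite Rmult_assoc, Rinv_l, Rmult_1_r in hx by lra. nra.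
Qed.

Lemma RInt_const_bound (g : R -> R) M a b : (forall s, continuous g s) ->
  (forall s, Rmin a b <= s <= Rmax a b -> Rabs (g s) <= M) -> Rabs (RInt g a b) <= M * Rabs (b - a).
Proof.
  intros hg hb. destruct (Rle_dec a b) as [hab|hab].
  - rewrite Rmin_left, Rmax_right in hb by lra. rewrite (Rabs_right (b - a)) by lra.
    rewrite Rmult_comm. apply abs_RInt_le_const; auto. now apply continuous_ex_RInt.
  - rewrite Rmin_right, Rmax_left in hb by lra. rewrite (Rabs_left (b - a)) by lra.
    rewrite <- (opp_RInt_swap g b a) by now apply continuous_ex_RInt.
    change (opp (RInt g b a)) with (- RInt g b a). rewrite Rabs_Ropp.
    replace (M * - (b - a)) with ((a - b) * M) by ring.
    apply abs_RInt_le_const; auto; [lra|]. now apply continuous_ex_RInt.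
Qed.

Lemma continuous_scaled_pow C k s : continuous (fun s => C * s ^ k) s.
Proof.
  apply (deriv_continuous _ _ (0 * s ^ k + C * (INR k * s ^ pred k))).
  apply deriv_mult; [apply deriv_const|apply derivable_pt_lim_pow].
Qed.

Lemma RInt_pow_bound_nonneg (g : R -> R) C k t : 0 <= t -> (forall s, continuous g s) ->
  (forall s, 0 <= s -> Rabs (g s) <= C * s ^ k) -> Rabs (RInt g 0 t) <= C * t ^ S k / INR (S k).
Proof.
  intros ht hg hb. assert (hk : 0 < INR (S k)) by (apply lt_0_INR; lia).
  assert (primitive : is_RInt (fun s => C * s ^ k) 0 t
     (minus (C * t ^ S k / INR (S k)) (C * 0 ^ S k / INR (S k)))).
  { apply (is_RInt_derive (fun s => C * s ^ S k / INR (S k))).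
    - intros x _. apply is_derive_Reals. unfold Rdiv.
      eapply deriv_eq.
      + apply (deriv_mult (fun s => C * s ^ S k) (fun _ => / INR (S k))); [|apply deriv_const].
        apply deriv_mult; [apply deriv_const|apply derivable_pt_lim_pow].
      + cbv beta. simpl pred. field. lra.
    - intros; apply continuous_scaled_pow. }
  assert (hint := norm_RInt_le g (fun s => C * s ^ k) 0 t _ _ ht
    (fun s hs => hb s (proj1 hs))
    (@RInt_correct R_CompleteNormedModule _ _ _ (continuous_ex_RInt _ _ _ hg)) primitive).
  change (minus ?a ?b) with (a - b) in hint.
  change (norm (RInt g 0 t)) with (Rabs (RInt g 0 t)) in hint.
  replace (0 ^ S k) with 0 in hint by (simpl; ring).
  lra.
Qed.

(* The same bound for t of either sign, with |s| and |t| (by reflection s -> -s). *)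
Lemma RInt_pow_bound (g : R -> R) C k t : (forall s, continuous g s) ->
  (forall s, Rabs (g s) <= C * Rabs s ^ k) -> Rabs (RInt g 0 t) <= C * Rabs t ^ S k / INR (S k).
Proof.
  intros hg hb. destruct (Rle_dec 0 t) as [ht|ht].
  - rewrite (Rabs_right t) by lra. apply RInt_pow_bound_nonneg; auto.
    intros s hs. specialize (hb s). now rewrite (Rabs_right s) in hb by lra.
  - replace (RInt g 0 t) with (RInt (fun y => - g (- y)) 0 (- t)).
    2:{ apply is_RInt_unique.
        apply (is_RInt_comp_opp (V:=R_NormedModule)). rewrite Ropp_0, Ropp_involutive.
        apply (@RInt_correct R_CompleteNormedModule). now apply continuous_ex_RInt. }
    rewrite (Rabs_left t) by lra.
    apply RInt_pow_bound_nonneg; [lra| |].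
    + intro s. apply (continuous_opp (V:=R_NormedModule)).
      apply (continuous_comp (fun y => - y) g); [|apply hg].
      apply continuity_pt_filterlim, (continuity_pt_opp (fun y => y)), continuity_pt_id.
    + intros s hs. specialize (hb (- s)).
      rewrite Rabs_Ropp in hb |- *. now rewrite (Rabs_right s) in hb by lra.
Qed.

Lemma le_of_vanishing_error A B e : (forall n, A <= B + e n) -> is_lim_seq e 0 -> A <= B.
Proof.
  intros h he. assert (H := is_lim_seq_le (fun _ => A) (fun n => B + e n) A (B + 0) h
    (is_lim_seq_const A) (is_lim_seq_plus' _ _ B 0 (is_lim_seq_const B) he)).
  simpl in H. lra.
Qed.

Definition dist3 (u v : nat -> R) : R :=
  Rabs (u 0%nat - v 0%nat) + Rabs (u 1%nat - v 1%nat) + Rabs (u 2%nat - v 2%nat).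

Lemma dist3_nonneg u v : 0 <= dist3 u v.
Proof.
  unfold dist3. pose proof (Rabs_pos (u 0%nat - v 0%nat)).
  pose proof (Rabs_pos (u 1%nat - v 1%nat)). pose proof (Rabs_pos (u 2%nat - v 2%nat)). lra.
Qed.

(* The Picard iterates
   differ by at most M (3L)^n |t|^(n+1) / (n+1)!, so they converge, and the
   limit satisfies the integral equation. *)
Section Picard.
Variables (F : (nat -> R) -> nat -> R) (M L : R) (x0 : nat -> R).
Hypothesis F_bounded : forall x i, Rabs (F x i) <= M.
Hypothesis F_lipschitz : forall u v i, Rabs (F u i - F v i) <= L * dist3 u v.

Lemma field_bound_nonneg : 0 <= M.
Proof. eapply Rle_trans; [apply Rabs_pos|apply (F_bounded x0 0%nat)]. Qed.

Lemma field_lipschitz_nonneg : 0 <= L.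
Proof.
  assert (h := F_lipschitz (fun _ => 0) (fun _ => 1) 0%nat).
  assert (h3 : dist3 (fun _ => 0) (fun _ => 1) = 3).
  { unfold dist3. rewrite Rminus_0_l, Rabs_Ropp, Rabs_R1. ring. }
  rewrite h3 in h. pose proof (Rabs_pos (F (fun _ => 0) 0%nat - F (fun _ => 1) 0%nat)). lra.
Qed.

Lemma field_along_continuous (Y : R -> nat -> R) :
  (forall t s i, Rabs (Y t i - Y s i) <= M * Rabs (t - s)) ->
  forall i s, continuous (fun s => F (Y s) i) s.
Proof.
  intros hY i. pose proof field_bound_nonneg. pose proof field_lipschitz_nonneg.
  apply (lipschitz_continuous _ (L * (3 * M))); [nra|].
  intros s s'. eapply Rle_trans; [apply F_lipschitz|]. unfold dist3.
  pose proof (hY s s' 0%nat). pose proof (hY s s' 1%nat). pose proof (hY s s' 2%nat).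
  rewrite Rmult_assoc. apply Rmult_le_compat_l; lra.
Qed.

Fixpoint picard (n : nat) (t : R) (i : nat) : R :=
  match n with
  | O => x0 i
  | S n => x0 i + RInt (fun s => F (picard n s) i) 0 t
  end.

Lemma picard_time_lipschitz n t s i : Rabs (picard n t i - picard n s i) <= M * Rabs (t - s).
Proof.
  revert t s i. induction n as [|n IH]; intros t s i; simpl.
  - rewrite Rminus_diag_eq, Rabs_R0 by auto.
    pose proof field_bound_nonneg. pose proof (Rabs_pos (t - s)). nra.
  - assert (hc := field_along_continuous (picard n) IH i).
    replace (x0 i + RInt (fun s0 => F (picard n s0) i) 0 t - (x0 i + RInt (fun s0 => F (picard n s0) i) 0 s))
      with (RInt (fun s0 => F (picard n s0) i) s t).
    + apply RInt_const_bound; auto.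
    + assert (chasles : RInt (fun s0 => F (picard n s0) i) 0 s + RInt (fun s0 => F (picard n s0) i) s t
                        = RInt (fun s0 => F (picard n s0) i) 0 t)
        by (apply (RInt_Chasles (V:=R_CompleteNormedModule)); now apply continuous_ex_RInt).
      lra.
Qed.

Lemma picard_field_continuous n i s : continuous (fun s => F (picard n s) i) s.
Proof. apply field_along_continuous. intros; apply picard_time_lipschitz. Qed.

Definition picard_gap (n : nat) (t : R) : R :=
  M * (3 * L) ^ n * Rabs t ^ S n / INR (Factorial.fact (S n)).

Lemma picard_step n t i : Rabs (picard (S n) t i - picard n t i) <= picard_gap n t.
Proof.
  revert t i. induction n as [|n IH]; intros t i.
  - simpl picard. unfold picard_gap. rewrite Rplus_minus_l.
    eapply Rle_trans; [apply RInt_const_bound; [intro; apply continuous_const|intros; apply F_bounded]|].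
    simpl. rewrite Rminus_0_r. lra.
  - change (picard (S (S n)) t i) with (x0 i + RInt (fun s => F (picard (S n) s) i) 0 t).
    change (picard (S n) t i) with (x0 i + RInt (fun s => F (picard n s) i) 0 t).
    rewrite Rminus_plus_l_l.
    assert (difference : RInt (fun s => F (picard (S n) s) i - F (picard n s) i) 0 t
      = RInt (fun s => F (picard (S n) s) i) 0 t - RInt (fun s => F (picard n s) i) 0 t)
      by (apply (RInt_minus (V:=R_CompleteNormedModule)); apply continuous_ex_RInt, picard_field_continuous).
    rewrite <- difference.
    pose proof (lt_0_INR _ (Factorial.lt_O_fact (S n))).
    eapply Rle_trans.
    + apply (RInt_pow_bound _ (3 * L * (M * (3 * L) ^ n / INR (Factorial.fact (S n)))) (S n)).
      * intro s. apply (continuous_minus (V:=R_NormedModule)); apply picard_field_continuous.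
      * intro s. eapply Rle_trans; [apply F_lipschitz|].
        replace (3 * L * (M * (3 * L) ^ n / INR (Factorial.fact (S n))) * Rabs s ^ S n)
          with (L * (3 * picard_gap n s)) by (unfold picard_gap; field; lra).
        apply Rmult_le_compat_l; [apply field_lipschitz_nonneg|].
        pose proof (IH s 0%nat). pose proof (IH s 1%nat). pose proof (IH s 2%nat).
        unfold dist3. lra.
    + right. unfold picard_gap. change (Factorial.fact (S (S n))) with (S (S n) * Factorial.fact (S n))%nat.
      rewrite mult_INR. pose proof (lt_0_INR (S (S n)) ltac:(lia)). simpl pow. field. lra.
Qed.

Lemma picard_gap_nonneg n t : 0 <= picard_gap n t.
Proof.
  unfold picard_gap. pose proof field_bound_nonneg. pose proof field_lipschitz_nonneg.
  pose proof (lt_0_INR _ (Factorial.lt_O_fact (S n))).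
  apply Rmult_le_pos; [|left; now apply Rinv_0_lt_compat].
  apply Rmult_le_pos; [apply Rmult_le_pos; [lra|apply pow_le; lra]|apply pow_le, Rabs_pos].
Qed.

Lemma picard_gap_mono n s t : Rabs s <= Rabs t -> picard_gap n s <= picard_gap n t.
Proof.
  intro h. unfold picard_gap. pose proof field_bound_nonneg. pose proof field_lipschitz_nonneg.
  pose proof (lt_0_INR _ (Factorial.lt_O_fact (S n))).
  apply Rmult_le_compat_r; [left; now apply Rinv_0_lt_compat|].
  apply Rmult_le_compat_l; [apply Rmult_le_pos; [lra|apply pow_le; lra]|].
  apply pow_incr. split; [apply Rabs_pos|exact h].
Qed.

(* The gaps are dominated by M |t| (3L|t|)^n / n!, a multiple of the exponential series. *)
Lemma picard_gap_summable t : ex_series (fun n => picard_gap n t).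
Proof.
  set (x := 3 * L * Rabs t).
  assert (hexp : ex_series (fun n => scal (pow_n x n) (/ INR (Factorial.fact n))))
    by (eexists; apply is_exp_Reals).
  apply (ex_series_scal_l (M * Rabs t)) in hexp.
  refine (@ex_series_le R_AbsRing R_CompleteNormedModule _ _ _ hexp). intro n.
  change (norm (picard_gap n t)) with (Rabs (picard_gap n t)).
  rewrite (Rabs_right (picard_gap n t)) by (apply Rle_ge, picard_gap_nonneg).
  change (scal ?a ?b) with (a * b). change (scal ?a ?b) with (a * b). rewrite pow_n_pow.
  pose proof field_bound_nonneg. pose proof field_lipschitz_nonneg.
  pose proof (lt_0_INR _ (Factorial.lt_O_fact n)).
  assert (hfact : INR (Factorial.fact n) <= INR (Factorial.fact (S n)))
    by (apply le_INR; simpl; lia).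
  assert (hx : 0 <= x ^ n) by (apply pow_le; unfold x; pose proof (Rabs_pos t); nra).
  unfold picard_gap. simpl (Rabs t ^ S n).
  replace (M * (3 * L) ^ n * (Rabs t * Rabs t ^ n) / INR (Factorial.fact (S n)))
    with (M * Rabs t * x ^ n * / INR (Factorial.fact (S n)))
    by (unfold x; rewrite !Rpow_mult_distr; field; lra).
  rewrite <- Rmult_assoc. apply Rmult_le_compat_l.
  - pose proof (Rabs_pos t). apply Rmult_le_pos; [nra|exact hx].
  - apply Rinv_le_contravar; lra.
Qed.

(* Tail of the gap series, bounding the distance from the n-th iterate to the limit. *)
Definition picard_tail (n : nat) (t : R) : R := Series (fun k => picard_gap (S n + k) t).

Lemma picard_tail_summable n t : ex_series (fun k => picard_gap (S n + k) t).
Proof. apply (ex_series_incr_n (fun k => picard_gap k t)), picard_gap_summable. Qed.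

Lemma picard_tail_vanishes t : is_lim_seq (fun n => picard_tail n t) 0.
Proof.
  assert (hsum : is_lim_seq (fun n => sum_f_R0 (fun k => picard_gap k t) n)
                  (Series (fun k => picard_gap k t))).
  { apply (is_lim_seq_ext (sum_n (fun k => picard_gap k t))); [intro; apply sum_n_Reals|].
    apply Series_correct, picard_gap_summable. }
  assert (H := is_lim_seq_minus' _ _ _ _ (is_lim_seq_const (Series (fun k => picard_gap k t))) hsum).
  rewrite Rminus_diag_eq in H by auto. revert H. apply is_lim_seq_ext.
  intro n. unfold picard_tail.
  rewrite (Series_incr_n (fun k => picard_gap k t) (S n)) by (lia || apply picard_gap_summable).
  simpl pred. ring.
Qed.

Lemma picard_tail_mono n s t : Rabs s <= Rabs t -> picard_tail n s <= picard_tail n t.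
Proof.
  intro h. unfold picard_tail. apply Series_le; [|apply picard_tail_summable].
  intro k. split; [apply picard_gap_nonneg|now apply picard_gap_mono].
Qed.

Definition picard_limit (t : R) (i : nat) : R :=
  x0 i + Series (fun n => picard (S n) t i - picard n t i).

Lemma picard_partial_sum t i n :
  sum_f_R0 (fun n => picard (S n) t i - picard n t i) n = picard (S n) t i - x0 i.
Proof. induction n as [|n IH]; [reflexivity|]. rewrite tech5, IH. ring. Qed.

Lemma picard_limit_close t i n : Rabs (picard_limit t i - picard (S n) t i) <= picard_tail n t.
Proof.
  assert (hsum : ex_series (fun n => picard (S n) t i - picard n t i)).
  { apply (@ex_series_le R_AbsRing R_CompleteNormedModule _ (fun n => picard_gap n t)); [|apply picard_gap_summable].
    intro k. apply picard_step. }
  unfold picard_limit, picard_tail.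
  rewrite (Series_incr_n _ (S n)) by (lia || exact hsum). simpl pred. rewrite picard_partial_sum.
  replace (x0 i + (picard (S n) t i - x0 i + Series (fun k => picard (S (S n + k)) t i - picard (S n + k) t i))
    - picard (S n) t i) with (Series (fun k => picard (S (S n + k)) t i - picard (S n + k) t i)) by ring.
  eapply Rle_trans; [apply Series_Rabs|].
  - apply (@ex_series_le R_AbsRing R_CompleteNormedModule _ (fun k => picard_gap (S n + k) t)); [|apply picard_tail_summable].
    intro k. rewrite Rabs_Rabsolu. apply picard_step.
  - apply Series_le; [|apply picard_tail_summable].
    intro k. split; [apply Rabs_pos|apply picard_step].
Qed.

Lemma picard_limit_time_lipschitz t s i : Rabs (picard_limit t i - picard_limit s i) <= M * Rabs (t - s).
Proof.
  apply (le_of_vanishing_error _ _ (fun n => picard_tail n t + picard_tail n s)).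
  - intro n. pose proof (picard_limit_close t i n). pose proof (picard_limit_close s i n).
    pose proof (picard_time_lipschitz (S n) t s i).
    apply Rabs_le. apply Rabs_le_between in H. apply Rabs_le_between in H0.
    apply Rabs_le_between in H1. lra.
  - replace 0 with (0 + 0) by ring. apply is_lim_seq_plus'; apply picard_tail_vanishes.
Qed.

Lemma picard_limit_field_continuous i s : continuous (fun s => F (picard_limit s) i) s.
Proof. apply field_along_continuous. intros; apply picard_limit_time_lipschitz. Qed.

Lemma picard_integral_close t i n :
  Rabs (RInt (fun s => F (picard (S n) s) i) 0 t - RInt (fun s => F (picard_limit s) i) 0 t)
    <= 3 * L * picard_tail n t * Rabs t.
Proof.
  assert (difference : RInt (fun s => F (picard (S n) s) i - F (picard_limit s) i) 0 t
    = RInt (fun s => F (picard (S n) s) i) 0 t - RInt (fun s => F (picard_limit s) i) 0 t)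
    by (apply (RInt_minus (V:=R_CompleteNormedModule)); apply continuous_ex_RInt;
        [apply picard_field_continuous|apply picard_limit_field_continuous]).
  rewrite <- difference.
  replace (Rabs t) with (Rabs (t - 0)) by now rewrite Rminus_0_r.
  apply RInt_const_bound.
  - intro s. apply (continuous_minus (V:=R_NormedModule));
      [apply picard_field_continuous|apply picard_limit_field_continuous].
  - intros s hs. eapply Rle_trans; [apply F_lipschitz|].
    assert (hst : Rabs s <= Rabs t).
    { unfold Rmin, Rmax in hs. destruct (Rle_dec 0 t); unfold Rabs; repeat destruct Rcase_abs; lra. }
    pose proof (picard_tail_mono n s t hst). pose proof field_lipschitz_nonneg.
    pose proof (picard_limit_close s 0%nat n). pose proof (picard_limit_close s 1%nat n).
    pose proof (picard_limit_close s 2%nat n).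
    unfold dist3. rewrite !(Rabs_minus_sym (picard (S n) s _)).
    replace (3 * L * picard_tail n t) with (L * (3 * picard_tail n t)) by ring.
    apply Rmult_le_compat_l; lra.
Qed.

Lemma picard_limit_integral t i : picard_limit t i = x0 i + RInt (fun s => F (picard_limit s) i) 0 t.
Proof.
  set (err := picard_limit t i - (x0 i + RInt (fun s => F (picard_limit s) i) 0 t)).
  assert (herr : Rabs err <= 0).
  { apply (le_of_vanishing_error _ _ (fun n => picard_tail (S n) t + 3 * L * picard_tail n t * Rabs t)).
    - intro n. pose proof (picard_limit_close t i (S n)) as h1.
      pose proof (picard_integral_close t i n) as h2.
      change (picard (S (S n)) t i) with (x0 i + RInt (fun s => F (picard (S n) s) i) 0 t) in h1.
      apply Rabs_le. apply Rabs_le_between in h1. apply Rabs_le_between in h2. unfold err. lra.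
    - replace 0 with (0 + 3 * L * 0 * Rabs t) by ring. apply is_lim_seq_plus'.
      + apply (is_lim_seq_incr_1 (fun n => picard_tail n t)), picard_tail_vanishes.
      + apply is_lim_seq_mult'; [|apply is_lim_seq_const].
        apply (is_lim_seq_scal_l _ (3 * L) 0), picard_tail_vanishes. }
  pose proof (Rabs_pos err). assert (Rabs err = 0) by lra.
  apply Rabs_eq_0 in H0. unfold err in H0. lra.
Qed.

Theorem picard_global_solution :
  is_solution3 F picard_limit /\ forall i, picard_limit 0 i = x0 i.
Proof.
  split.
  - intros t i _. apply (deriv_ext (fun s => x0 i + RInt (fun s => F (picard_limit s) i) 0 s)).
    + intro s. symmetry. apply picard_limit_integral.
    + eapply deriv_eq; [apply deriv_plus; [apply deriv_const|apply RInt_deriv]|ring].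
      intro; apply picard_limit_field_continuous.
  - intro i. rewrite picard_limit_integral, RInt_point. change (x0 i + 0 = x0 i). ring.
Qed.
End Picard.

Lemma energy_derivative_bound L d0 d1 d2 e0 e1 e2 : 0 <= L ->
  Rabs e0 <= L * (Rabs d0 + Rabs d1 + Rabs d2) ->
  Rabs e1 <= L * (Rabs d0 + Rabs d1 + Rabs d2) ->
  Rabs e2 <= L * (Rabs d0 + Rabs d1 + Rabs d2) ->
  Rabs (2 * (d0 * e0 + d1 * e1 + d2 * e2)) <= 6 * L * (d0 ^ 2 + d1 ^ 2 + d2 ^ 2).
Proof.
  intros hL h0 h1 h2.
  set (N := Rabs d0 + Rabs d1 + Rabs d2) in *.
  assert (hN : N ^ 2 <= 3 * (d0 ^ 2 + d1 ^ 2 + d2 ^ 2)).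
  { unfold N. rewrite <- (pow2_abs d0), <- (pow2_abs d1), <- (pow2_abs d2).
    pose proof (pow2_ge_0 (Rabs d0 - Rabs d1)). pose proof (pow2_ge_0 (Rabs d1 - Rabs d2)).
    pose proof (pow2_ge_0 (Rabs d0 - Rabs d2)). nra. }
  assert (hprod : forall d e, Rabs e <= L * N -> Rabs (d * e) <= Rabs d * (L * N)).
  { intros d e he. rewrite Rabs_mult. apply Rmult_le_compat_l; [apply Rabs_pos|exact he]. }
  pose proof (hprod d0 e0 h0). pose proof (hprod d1 e1 h1). pose proof (hprod d2 e2 h2).
  rewrite Rabs_mult, (Rabs_right 2) by lra.
  assert (Rabs (d0 * e0 + d1 * e1 + d2 * e2) <= L * N ^ 2).
  { eapply Rle_trans; [apply Rabs_triang|]. eapply Rle_trans;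
      [apply Rplus_le_compat_r, Rabs_triang|].
    replace (L * N ^ 2) with ((Rabs d0 + Rabs d1 + Rabs d2) * (L * N)) by (unfold N; ring). lra. }
  nra.
Qed.

(* Uniqueness: two solutions of a field that is L-Lipschitz on a set S, both
   staying in S, that agree at one time agree at all times (Gronwall applied
   to the squared distance between them). *)
Lemma solution_unique F L (S : (nat -> R) -> Prop) phi psi : 0 <= L ->
  (forall u v i, S u -> S v -> (i < 3)%nat -> Rabs (F u i - F v i) <= L * dist3 u v) ->
  is_solution3 F phi -> is_solution3 F psi -> (forall t, S (phi t)) -> (forall t, S (psi t)) ->
  forall t0, (forall i, (i < 3)%nat -> phi t0 i = psi t0 i) ->
  forall t i, (i < 3)%nat -> phi t i = psi t i.
Proof.
  intros hL hlip hphi hpsi hS1 hS2 t0 h0 t i hi.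
  set (d := fun t i => phi t i - psi t i).
  set (e := fun t i => F (phi t) i - F (psi t) i).
  set (u := fun t => d t 0%nat ^ 2 + d t 1%nat ^ 2 + d t 2%nat ^ 2).
  assert (hu : forall t, derivable_pt_lim u t (2 * (d t 0%nat * e t 0%nat + d t 1%nat * e t 1%nat
                                                  + d t 2%nat * e t 2%nat))).
  { intro s. assert (hsq : forall j, (j < 3)%nat ->
      derivable_pt_lim (fun s => d s j ^ 2) s (2 * (d s j * e s j))).
    { intros j hj. eapply deriv_eq.
      - apply (deriv_comp (fun y => y ^ 2) (fun s => d s j) s (INR 2 * d s j ^ 1)).
        + apply derivable_pt_lim_pow.
        + unfold d, e. apply deriv_minus; [apply hphi|apply hpsi]; exact hj.
      - unfold e. simpl. ring. }
    eapply deriv_eq; [apply deriv_plus; [apply deriv_plus|]; apply hsq; lia|ring]. }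
  assert (hzero := gronwall_zero u _ (6 * L) t0 hu).
  assert (u t = 0).
  { apply hzero.
    - intro s. unfold u. pose proof (pow2_ge_0 (d s 0%nat)). pose proof (pow2_ge_0 (d s 1%nat)).
      pose proof (pow2_ge_0 (d s 2%nat)). lra.
    - intro s. apply energy_derivative_bound; auto; apply hlip; auto; lia.
    - unfold u, d. rewrite !h0 by lia. ring. }
  unfold u in H. pose proof (pow2_ge_0 (d t 0%nat)). pose proof (pow2_ge_0 (d t 1%nat)).
  pose proof (pow2_ge_0 (d t 2%nat)).
  assert (d t i = 0) by (destruct i as [|[|[|i]]]; [nra|nra|nra|lia]).
  unfold d in H3. lra.
Qed.

Lemma cmp_sign_eq p : cmp_sign p p = 0.
Proof. unfold cmp_sign. destruct (Rlt_dec p p); lra. Qed.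

Lemma cmp_sign_lt p q : p < q -> cmp_sign p q = 1.
Proof. intro h. unfold cmp_sign. destruct (Rlt_dec p q); destruct (Rlt_dec q p); lra. Qed.

Lemma cmp_sign_gt p q : q < p -> cmp_sign p q = -1.
Proof. intro h. unfold cmp_sign. destruct (Rlt_dec p q); destruct (Rlt_dec q p); lra. Qed.

(* The common factor of the RPS dynamics; it equals 1 - xy - xz - yz on the
   simplex but, as written, is a polynomial that needs no simplex assumption. *)
Definition rps_quad (x : nat -> R) : R :=
  x 0%nat * x 0%nat + x 1%nat * x 1%nat + x 2%nat * x 2%nat
  + x 0%nat * x 1%nat + x 1%nat * x 2%nat + x 2%nat * x 0%nat.

Definition rps_field (x : nat -> R) (i : nat) : R :=
  match i with
  | 0%nat => x 0%nat * (x 2%nat - x 1%nat) * rps_quad x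
  | 1%nat => x 1%nat * (x 0%nat - x 2%nat) * rps_quad x
  | 2%nat => x 2%nat * (x 1%nat - x 0%nat) * rps_quad x
  | _ => 0
  end.

(* Since -a < 0 < b, every payoff comparison has a definite sign, and the
   triple sum defining the IBR field collapses to [rps_field]. *)
Lemma ibr_rps a b x i : 0 < a -> 0 < b -> (i < 3)%nat -> ibr 3 (rps a b) x i = rps_field x i.
Proof.
  intros ha hb hi.
  assert (h1 : -a < 0) by lra. assert (h2 : -a < b) by lra.
  pose proof (cmp_sign_lt _ _ h1) as e1. pose proof (cmp_sign_lt _ _ hb) as e2.
  pose proof (cmp_sign_lt _ _ h2) as e3. pose proof (cmp_sign_gt _ _ h1) as e4.
  pose proof (cmp_sign_gt _ _ hb) as e5. pose proof (cmp_sign_gt _ _ h2) as e6.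
  pose proof (cmp_sign_eq 0) as e7. pose proof (cmp_sign_eq (-a)) as e8.
  pose proof (cmp_sign_eq b) as e9.
  destruct i as [|[|[|i]]]; [| | | lia]; unfold ibr, rps_field, rps_quad; simpl rsum; simpl rps;
    rewrite ?e1, ?e2, ?e3, ?e4, ?e5, ?e6, ?e7, ?e8, ?e9; ring.
Qed.

Lemma rps_quad_on_simplex x : x 0%nat + x 1%nat + x 2%nat = 1 ->
  rps_quad x = 1 - x 0%nat * x 1%nat - x 0%nat * x 2%nat - x 1%nat * x 2%nat.
Proof. intro h. unfold rps_quad. replace (x 2%nat) with (1 - x 0%nat - x 1%nat) by lra. ring. Qed.

Lemma rps_quad_lower x : x 0%nat + x 1%nat + x 2%nat = 1 -> 2 / 3 <= rps_quad x.
Proof.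
  intro h. rewrite rps_quad_on_simplex by auto. replace (x 2%nat) with (1 - x 0%nat - x 1%nat) by lra.
  pose proof (pow2_ge_0 (x 0%nat - x 1%nat)). pose proof (pow2_ge_0 (x 0%nat + x 1%nat - 2 / 3)). nra.
Qed.

Lemma ibr_rps_explicit a b : 0 < a -> 0 < b ->
  forall x : nat -> R, in_simplex3 x ->
     let '(p, q, r) := (x 0%nat, x 1%nat, x 2%nat) in
     ibr 3 (rps a b) x 0%nat = p * (r - q) * (1 - p*q - p*r - q*r) /\
     ibr 3 (rps a b) x 1%nat = q * (p - r) * (1 - p*q - p*r - q*r) /\
     ibr 3 (rps a b) x 2%nat = r * (q - p) * (1 - p*q - p*r - q*r).
Proof.
  intros ha hb x [_ [_ [_ hs]]]. simpl.
  rewrite !ibr_rps by (auto; lia). unfold rps_field. rewrite rps_quad_on_simplex by auto.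
  repeat split; ring.
Qed.

(* Second part: in the interior the field vanishes exactly at the barycenter,
   because the common factor is positive and x_i > 0. *)
Lemma ibr_rps_rest_point a b : 0 < a -> 0 < b ->
  forall x : nat -> R, in_interior3 x ->
     ((forall i : nat, (i < 3)%nat -> ibr 3 (rps a b) x i = 0) <-> is_center3 x).
Proof.
  intros ha hb x [h0 [h1 [h2 hs]]]. pose proof (rps_quad_lower x hs) as hq. split.
  - intro H. pose proof (H 0%nat ltac:(lia)) as E0. pose proof (H 1%nat ltac:(lia)) as E1.
    rewrite ibr_rps in E0, E1 by (auto; lia). unfold rps_field in E0, E1.
    apply Rmult_integral in E0 as [E0|E0]; [|lra]. apply Rmult_integral in E0 as [E0|E0]; [lra|].
    apply Rmult_integral in E1 as [E1|E1]; [|lra]. apply Rmult_integral in E1 as [E1|E1]; [lra|].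
    unfold is_center3. lra.
  - intros [c0 [c1 c2]] i hi. rewrite ibr_rps by auto.
    destruct i as [|[|[|i]]]; [| | | lia]; unfold rps_field; rewrite c0, c1, c2; ring.
Qed.

Lemma rps_field_sum x : rps_field x 0%nat + rps_field x 1%nat + rps_field x 2%nat = 0.
Proof. unfold rps_field. ring. Qed.

Lemma rps_field_product x : x 1%nat * x 2%nat * rps_field x 0%nat + x 0%nat * x 2%nat * rps_field x 1%nat
  + x 0%nat * x 1%nat * rps_field x 2%nat = 0.
Proof. unfold rps_field. ring. Qed.

Lemma rps_field_ext x y : (forall i, (i < 3)%nat -> x i = y i) -> forall j, rps_field x j = rps_field y j.
Proof. intros h j. unfold rps_field, rps_quad. rewrite !h by lia. reflexivity. Qed.

Definition unit_box (x : nat -> R) : Prop :=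
  0 <= x 0%nat <= 1 /\ 0 <= x 1%nat <= 1 /\ 0 <= x 2%nat <= 1.

Lemma interior_unit_box x : in_interior3 x -> unit_box x.
Proof. intros [h0 [h1 [h2 h3]]]. unfold unit_box. lra. Qed.

Lemma interior_coordinate_pos x i : in_interior3 x -> (i < 3)%nat -> 0 < x i.
Proof. intros [h0 [h1 [h2 _]]] hi. destruct i as [|[|[|i]]]; [auto|auto|auto|lia]. Qed.

Lemma abs_prod_diff a1 a2 b1 b2 B1 B2 : Rabs a2 <= B2 -> Rabs b1 <= B1 ->
  Rabs (a1 * a2 - b1 * b2) <= Rabs (a1 - b1) * B2 + B1 * Rabs (a2 - b2).
Proof.
  intros h2 h1. replace (a1 * a2 - b1 * b2) with ((a1 - b1) * a2 + b1 * (a2 - b2)) by ring.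
  eapply Rle_trans; [apply Rabs_triang|]. rewrite !Rabs_mult.
  apply Rplus_le_compat.
  - apply Rmult_le_compat_l; [apply Rabs_pos|auto].
  - apply Rmult_le_compat_r; [apply Rabs_pos|auto].
Qed.

Lemma abs_unit r : 0 <= r <= 1 -> Rabs r <= 1.
Proof. intro h. rewrite Rabs_right; lra. Qed.

Lemma prod2_lipschitz a1 a2 b1 b2 : 0 <= a2 <= 1 -> 0 <= b1 <= 1 ->
  Rabs (a1 * a2 - b1 * b2) <= Rabs (a1 - b1) + Rabs (a2 - b2).
Proof. intros h2 h1. pose proof (abs_prod_diff a1 a2 b1 b2 1 1 (abs_unit _ h2) (abs_unit _ h1)). lra. Qed.

Lemma prod3_lipschitz a1 a2 a3 b1 b2 b3 : 0 <= a1 <= 1 -> 0 <= b1 <= 1 ->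
  Rabs a2 <= 1 -> Rabs b2 <= 1 -> 0 <= a3 <= 6 -> 0 <= b3 <= 6 ->
  Rabs (a1 * a2 * a3 - b1 * b2 * b3) <= 6 * Rabs (a1 - b1) + 6 * Rabs (a2 - b2) + Rabs (a3 - b3).
Proof.
  intros h1 g1 h2 g2 h3 g3.
  assert (hb12 : Rabs (b1 * b2) <= 1).
  { rewrite Rabs_mult, (Rabs_right b1) by lra. pose proof (Rabs_pos b2). nra. }
  pose proof (abs_prod_diff (a1 * a2) a3 (b1 * b2) b3 1 6 ltac:(apply Rabs_le; lra) hb12).
  pose proof (abs_prod_diff a1 a2 b1 b2 1 1 h2 ltac:(apply Rabs_le; lra)).
  pose proof (Rabs_pos (a3 - b3)). lra.
Qed.

Lemma rps_quad_box x : unit_box x -> 0 <= rps_quad x <= 6.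
Proof. intros [h0 [h1 h2]]. unfold rps_quad. split; nra. Qed.

Lemma rps_quad_lipschitz u v : unit_box u -> unit_box v -> Rabs (rps_quad u - rps_quad v) <= 4 * dist3 u v.
Proof.
  intros [u0 [u1 u2]] [v0 [v1 v2]]. unfold rps_quad, dist3.
  pose proof (prod2_lipschitz (u 0%nat) (u 0%nat) (v 0%nat) (v 0%nat) u0 v0).
  pose proof (prod2_lipschitz (u 1%nat) (u 1%nat) (v 1%nat) (v 1%nat) u1 v1).
  pose proof (prod2_lipschitz (u 2%nat) (u 2%nat) (v 2%nat) (v 2%nat) u2 v2).
  pose proof (prod2_lipschitz (u 0%nat) (u 1%nat) (v 0%nat) (v 1%nat) u1 v0).
  pose proof (prod2_lipschitz (u 1%nat) (u 2%nat) (v 1%nat) (v 2%nat) u2 v1).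
  pose proof (prod2_lipschitz (u 2%nat) (u 0%nat) (v 2%nat) (v 0%nat) u0 v2).
  repeat match goal with H : Rabs _ <= _ |- _ => apply Rabs_le_between in H end.
  apply Rabs_le. lra.
Qed.

Lemma component_bound p q r Q : 0 <= p <= 1 -> 0 <= q <= 1 -> 0 <= r <= 1 -> 0 <= Q <= 6 ->
  Rabs (p * (q - r) * Q) <= 6.
Proof.
  intros hp hq hr hQ. rewrite !Rabs_mult, (Rabs_right p), (Rabs_right Q) by lra.
  assert (hqr : 0 <= Rabs (q - r) <= 1) by (split; [apply Rabs_pos|apply Rabs_le; lra]).
  assert (0 <= p * Rabs (q - r) <= 1) by (split; nra). nra.
Qed.

Lemma rps_field_box_bound x i : unit_box x -> Rabs (rps_field x i) <= 6.
Proof.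
  intro hx. pose proof (rps_quad_box x hx). destruct hx as [h0 [h1 h2]].
  destruct i as [|[|[|i]]]; unfold rps_field; try apply component_bound; auto.
  rewrite Rabs_R0. lra.
Qed.

Lemma rps_field_box_lipschitz u v i : unit_box u -> unit_box v ->
  Rabs (rps_field u i - rps_field v i) <= 20 * dist3 u v.
Proof.
  intros hu hv. pose proof (rps_quad_lipschitz u v hu hv). pose proof (dist3_nonneg u v).
  pose proof (rps_quad_box u hu). pose proof (rps_quad_box v hv).
  destruct hu as [u0 [u1 u2]], hv as [v0 [v1 v2]].
  assert (hdiff : forall j k, Rabs ((u j - u k) - (v j - v k)) <= Rabs (u j - v j) + Rabs (u k - v k)).
  { intros j k. replace ((u j - u k) - (v j - v k)) with ((u j - v j) + - (u k - v k)) by ring.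
    eapply Rle_trans; [apply Rabs_triang|]. rewrite Rabs_Ropp. lra. }
  destruct i as [|[|[|i]]]; unfold rps_field; [| | | rewrite Rminus_0_r, Rabs_R0; lra];
    (eapply Rle_trans; [apply prod3_lipschitz; auto; apply Rabs_le; lra|]).
  - pose proof (hdiff 2%nat 1%nat). unfold dist3 in *. lra.
  - pose proof (hdiff 0%nat 2%nat). unfold dist3 in *. lra.
  - pose proof (hdiff 1%nat 0%nat). unfold dist3 in *. lra.
Qed.

(* Clamping each coordinate into [0,1] turns [rps_field] into a globally
   bounded, globally Lipschitz field that agrees with it on the unit box. *)
Definition clamp (r : R) : R := Rmin 1 (Rmax 0 r).
Definition clamp3 (x : nat -> R) (i : nat) : R := clamp (x i).
Definition rps_clamped (x : nat -> R) (i : nat) : R := rps_field (clamp3 x) i.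

Lemma clamp_unit r : 0 <= clamp r <= 1.
Proof. unfold clamp, Rmin, Rmax. repeat destruct Rle_dec; lra. Qed.

Lemma clamp_id r : 0 <= r <= 1 -> clamp r = r.
Proof. intro h. unfold clamp, Rmin, Rmax. repeat destruct Rle_dec; lra. Qed.

Lemma clamp_lipschitz u v : Rabs (clamp u - clamp v) <= Rabs (u - v).
Proof.
  unfold clamp, Rmin, Rmax. apply Rabs_le.
  pose proof (Rle_abs (u - v)). pose proof (Rle_abs (- (u - v))). rewrite Rabs_Ropp in *.
  repeat destruct Rle_dec; lra.
Qed.

Lemma clamp_mul r : Rabs (r * clamp r) <= r ^ 2.
Proof. unfold clamp, Rmin, Rmax. apply Rabs_le. repeat destruct Rle_dec; nra. Qed.

Lemma clamp3_box x : unit_box (clamp3 x).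
Proof. unfold unit_box, clamp3. repeat split; apply clamp_unit. Qed.

Lemma clamp3_dist3 u v : dist3 (clamp3 u) (clamp3 v) <= dist3 u v.
Proof.
  unfold dist3, clamp3. pose proof (clamp_lipschitz (u 0%nat) (v 0%nat)).
  pose proof (clamp_lipschitz (u 1%nat) (v 1%nat)). pose proof (clamp_lipschitz (u 2%nat) (v 2%nat)). lra.
Qed.

Lemma rps_clamped_bounded x i : Rabs (rps_clamped x i) <= 6.
Proof. apply rps_field_box_bound, clamp3_box. Qed.

Lemma rps_clamped_lipschitz u v i : Rabs (rps_clamped u i - rps_clamped v i) <= 20 * dist3 u v.
Proof.
  unfold rps_clamped. eapply Rle_trans; [apply rps_field_box_lipschitz; apply clamp3_box|].
  pose proof (clamp3_dist3 u v). lra.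
Qed.

Lemma rps_clamped_on_box x j : unit_box x -> rps_clamped x j = rps_field x j.
Proof.
  intros [h0 [h1 h2]]. apply rps_field_ext. intros i hi. unfold clamp3. apply clamp_id.
  destruct i as [|[|[|i]]]; [auto|auto|auto|lia].
Qed.

(* The rate of each coordinate is bounded by 6 |x_i|: faces x_i = 0 are invariant. *)
Lemma rps_clamped_coordinate x i : (i < 3)%nat -> Rabs (x i * rps_clamped x i) <= 6 * x i ^ 2.
Proof.
  intro hi. unfold rps_clamped.
  assert (hshape : forall c, Rabs c <= 1 ->
    Rabs (x i * (clamp3 x i * c * rps_quad (clamp3 x))) <= 6 * x i ^ 2).
  { intros c hc. pose proof (rps_quad_box _ (clamp3_box x)). pose proof (clamp_mul (x i)).
    replace (x i * (clamp3 x i * c * rps_quad (clamp3 x)))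
      with ((x i * clamp (x i)) * (c * rps_quad (clamp3 x))) by (unfold clamp3; ring).
    rewrite Rabs_mult, (Rabs_mult c), (Rabs_right (rps_quad _)) by lra.
    pose proof (Rabs_pos (x i * clamp (x i))). pose proof (Rabs_pos c).
    assert (0 <= Rabs c * rps_quad (clamp3 x) <= 6) by (split; nra). nra. }
  pose proof (clamp3_box x) as [b0 [b1 b2]].
  destruct i as [|[|[|i]]]; [| | | lia]; unfold rps_field; apply hshape, Rabs_le; lra.
Qed.

Lemma solution_sum_invariant F phi :
  (forall x, F x 0%nat + F x 1%nat + F x 2%nat = 0) -> is_solution3 F phi ->
  forall t, phi t 0%nat + phi t 1%nat + phi t 2%nat = phi 0 0%nat + phi 0 1%nat + phi 0 2%nat.
Proof.
  intros hF hs t. apply (deriv_zero_const (fun t => phi t 0%nat + phi t 1%nat + phi t 2%nat)).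
  intro s. eapply deriv_eq; [apply deriv_plus; [apply deriv_plus|]; apply hs; lia|apply hF].
Qed.

Lemma solution_product_invariant F phi :
  (forall x, x 1%nat * x 2%nat * F x 0%nat + x 0%nat * x 2%nat * F x 1%nat
             + x 0%nat * x 1%nat * F x 2%nat = 0) -> is_solution3 F phi ->
  forall t, phi t 0%nat * phi t 1%nat * phi t 2%nat = phi 0 0%nat * phi 0 1%nat * phi 0 2%nat.
Proof.
  intros hF hs t. apply (deriv_zero_const (fun t => phi t 0%nat * phi t 1%nat * phi t 2%nat)).
  intro s. eapply deriv_eq; [apply deriv_mult; [apply deriv_mult|]; apply hs; lia|].
  rewrite <- (hF (phi s)). ring.
Qed.

(* If the rate of x_i is bounded by K |x_i|, a coordinate that vanishes once
   vanishes forever (Gronwall applied to x_i^2). *)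
Lemma coordinate_never_vanishes F K phi i : (i < 3)%nat -> is_solution3 F phi ->
  (forall x, Rabs (x i * F x i) <= K * x i ^ 2) ->
  forall t, phi t i = 0 -> forall s, phi s i = 0.
Proof.
  intros hi hs hK t ht s.
  assert (hsq : phi s i ^ 2 = 0).
  { apply (gronwall_zero (fun s => phi s i ^ 2) (fun s => 2 * (phi s i * F (phi s) i)) (2 * K) t).
    - intro r. eapply deriv_eq.
      + apply (deriv_comp (fun y => y ^ 2) (fun s => phi s i) r (INR 2 * phi r i ^ 1));
          [apply derivable_pt_lim_pow|apply hs, hi].
      + simpl. ring.
    - intro; apply pow2_ge_0.
    - intro r. rewrite Rabs_mult, Rabs_right by lra. pose proof (hK (phi r)). lra.
    - rewrite ht. ring. }
  nra.
Qed.

(* The open simplex is invariant: the sum stays 1 and, since xyz is conserved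
   and positive, no coordinate can reach 0. *)
Lemma rps_interior_invariant phi : is_solution3 rps_field phi -> in_interior3 (phi 0) ->
  forall t, in_interior3 (phi t).
Proof.
  intros hs [h0 [h1 [h2 h3]]] t.
  pose proof (solution_product_invariant _ _ rps_field_product hs) as hprod.
  assert (hnz : forall i, (i < 3)%nat -> forall t, phi t i <> 0).
  { assert (0 < phi 0 0%nat * phi 0 1%nat * phi 0 2%nat) by (apply Rmult_lt_0_compat; nra).
    intros i hi s e. specialize (hprod s).
    destruct i as [|[|[|i]]]; [| | | lia]; rewrite e in hprod; lra. }
  assert (hpos : forall i, (i < 3)%nat -> 0 < phi 0 i -> 0 < phi t i).
  { intros i hi hpos. apply (never_zero_stays_pos (fun t => phi t i)); auto.
    intro s. eapply deriv_continuity_pt. apply hs, hi. }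
  repeat split; try (apply hpos; auto; lia).
  rewrite (solution_sum_invariant _ _ rps_field_sum hs). exact h3.
Qed.

(* Existence: the global solution of the clamped field starting in the open
   simplex never leaves it, hence it solves the RPS dynamics itself. *)
Lemma rps_solution_exists x0 : in_interior3 x0 ->
  exists phi, is_solution3 rps_field phi /\ forall i, (i < 3)%nat -> phi 0 i = x0 i.
Proof.
  intro hx. destruct (picard_global_solution rps_clamped 6 20 x0 rps_clamped_bounded
    rps_clamped_lipschitz) as [hs hinit].
  set (phi := picard_limit rps_clamped x0). exists phi.
  assert (hpos : forall i, (i < 3)%nat -> forall t, 0 < phi t i).
  { intros i hi. pose proof (interior_coordinate_pos x0 i hx hi).
    apply never_zero_stays_pos.
    - intro s. eapply deriv_continuity_pt. apply hs, hi.
    - now rewrite hinit.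
    - intros t ht.
      pose proof (coordinate_never_vanishes _ 6 _ i hi hs (fun x => rps_clamped_coordinate x i hi) t ht 0)
        as hvanish.
      unfold phi in hvanish. rewrite hinit in hvanish. lra. }
  assert (hsum : forall t, phi t 0%nat + phi t 1%nat + phi t 2%nat = 1).
  { intro t. destruct hx as [_ [_ [_ hs1]]].
    rewrite (solution_sum_invariant rps_clamped phi (fun x => rps_field_sum _) hs).
    unfold phi. rewrite !hinit. exact hs1. }
  split; [|intros; apply hinit].
  intros t i hi. rewrite <- rps_clamped_on_box; [apply hs, hi|].
  apply interior_unit_box. pose proof (hpos 0%nat). pose proof (hpos 1%nat). pose proof (hpos 2%nat).
  repeat split; auto.
Qed.

Lemma rps_solution_unique phi psi : is_solution3 rps_field phi -> is_solution3 rps_field psi ->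
  (forall t, unit_box (phi t)) -> (forall t, unit_box (psi t)) ->
  forall t0, (forall i, (i < 3)%nat -> phi t0 i = psi t0 i) ->
  forall t i, (i < 3)%nat -> phi t i = psi t i.
Proof.
  apply (solution_unique rps_field 20 unit_box); [lra|].
  intros u v i hu hv _. now apply rps_field_box_lipschitz.
Qed.

(* A solution that is not at the barycenter at time 0 never reaches it, since
   the barycenter is itself a (constant) solution. *)
Lemma rps_center_unreachable phi : is_solution3 rps_field phi -> (forall t, in_interior3 (phi t)) ->
  ~ is_center3 (phi 0) -> forall t, ~ is_center3 (phi t).
Proof.
  intros hs hint hnc t [c0 [c1 c2]]. apply hnc.
  set (center := fun (_ : R) (_ : nat) => 1 / 3).
  assert (hcenter : is_solution3 rps_field center).
  { intros s i hi. unfold center. eapply deriv_eq; [apply deriv_const|].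
    destruct i as [|[|[|i]]]; [| | | lia]; unfold rps_field, rps_quad, center; ring. }
  assert (heq := rps_solution_unique phi center hs hcenter (fun s => interior_unit_box _ (hint s))
    (fun s => ltac:(unfold unit_box, center; lra)) t
    ltac:(intros i hi; destruct i as [|[|[|i]]]; [auto|auto|auto|lia]) 0).
  unfold is_center3. rewrite !heq by lia. unfold center. auto.
Qed.

Lemma nonzero_sq_pos a : a <> 0 -> 0 < a ^ 2.
Proof. intro h. replace (a ^ 2) with (Rsqr a) by (unfold Rsqr; ring). now apply Rsqr_pos_lt. Qed.

Lemma centered_radius_pos x : x 0%nat + x 1%nat + x 2%nat = 1 -> ~ is_center3 x ->
  0 < (3 * x 0%nat - 1) ^ 2 + (x 1%nat - x 2%nat) ^ 2.
Proof.
  intros hs hn. pose proof (pow2_ge_0 (3 * x 0%nat - 1)). pose proof (pow2_ge_0 (x 1%nat - x 2%nat)).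
  destruct (Req_dec (3 * x 0%nat - 1) 0) as [h0|h0].
  - destruct (Req_dec (x 1%nat - x 2%nat) 0) as [h1|h1].
    + exfalso. apply hn. unfold is_center3. lra.
    + pose proof (nonzero_sq_pos _ h1). lra.
  - pose proof (nonzero_sq_pos _ h0). lra.
Qed.

Lemma product_below_pairs x y z : 0 < x -> 0 < y -> 0 < z -> x + y + z = 1 ->
  ~ (x = 1/3 /\ y = 1/3 /\ z = 1/3) -> 3 * (x * y * z) - (x * y + y * z + z * x) / 3 < 0.
Proof.
  intros hx hy hz hs hn.
  assert (K : (x + y + z) * (x * y + y * z + z * x) - 9 * (x * y * z)
              = x * (y - z) ^ 2 + y * (z - x) ^ 2 + z * (x - y) ^ 2) by ring.
  rewrite hs in K.
  assert (0 <= x * (y - z) ^ 2) by (apply Rmult_le_pos; [lra|apply pow2_ge_0]).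
  assert (0 <= y * (z - x) ^ 2) by (apply Rmult_le_pos; [lra|apply pow2_ge_0]).
  assert (0 <= z * (x - y) ^ 2) by (apply Rmult_le_pos; [lra|apply pow2_ge_0]).
  assert (0 < x * (y - z) ^ 2 + y * (z - x) ^ 2 + z * (x - y) ^ 2).
  { destruct (Req_dec x y).
    - destruct (Req_dec y z); [exfalso; apply hn; lra|].
      assert (0 < x * (y - z) ^ 2) by (apply Rmult_lt_0_compat; [lra|apply nonzero_sq_pos; lra]). lra.
    - assert (0 < z * (x - y) ^ 2) by (apply Rmult_lt_0_compat; [lra|apply nonzero_sq_pos; lra]). lra. }
  lra.
Qed.

Lemma codirectional_multiple p1 p2 q1 q2 : 0 < p1 ^ 2 + p2 ^ 2 ->
  q1 * p2 - q2 * p1 = 0 -> 0 < q1 * p1 + q2 * p2 ->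
  exists l, 0 < l /\ q1 = l * p1 /\ q2 = l * p2.
Proof.
  intros hp hcross hdot. exists ((q1 * p1 + q2 * p2) / (p1 ^ 2 + p2 ^ 2)).
  split; [apply Rdiv_lt_0_compat; lra|].
  split; apply (Rmult_eq_reg_r (p1 ^ 2 + p2 ^ 2)); try lra; field_simplify; try lra.
  - replace (q1 * p1 ^ 2 + q1 * p2 ^ 2) with (q1 * p1 ^ 2 + q2 * p1 * p2 + p2 * (q1 * p2 - q2 * p1)) by ring.
    rewrite hcross. ring.
  - replace (q2 * p1 ^ 2 + q2 * p2 ^ 2) with (q1 * p1 * p2 + q2 * p2 ^ 2 - p1 * (q1 * p2 - q2 * p1)) by ring.
    rewrite hcross. ring.
Qed.

Lemma product_injective_on_ray a b c l : 0 < a -> 0 < b -> 0 < c -> a + b + c = 1 ->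
  ~ (a = 1/3 /\ b = 1/3 /\ c = 1/3) -> 0 < l ->
  0 < 1/3 + l * (a - 1/3) -> 0 < 1/3 + l * (b - 1/3) -> 0 < 1/3 + l * (c - 1/3) ->
  (1/3 + l * (a - 1/3)) * (1/3 + l * (b - 1/3)) * (1/3 + l * (c - 1/3)) = a * b * c -> l = 1.
Proof.
  intros ha hb hc hs hn hl ha' hb' hc' hprod.
  set (a' := 1/3 + l * (a - 1/3)) in *. set (b' := 1/3 + l * (b - 1/3)) in *.
  set (c' := 1/3 + l * (c - 1/3)) in *.
  assert (hn' : ~ (a' = 1/3 /\ b' = 1/3 /\ c' = 1/3)).
  { intros [e1 [e2 _]]. apply hn. unfold a', b' in *.
    assert (l * (a - 1/3) = 0) by lra. assert (l * (b - 1/3) = 0) by lra.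
    apply Rmult_integral in H as [|]; apply Rmult_integral in H0 as [|]; try lra; repeat split; lra. }
  pose proof (product_below_pairs a b c ha hb hc hs hn) as d.
  pose proof (product_below_pairs a' b' c' ha' hb' hc' ltac:(unfold a', b', c'; replace c with (1 - a - b) by lra; field) hn') as d'.
  assert (K : a' * b' * c' - a * b * c = (l - 1) *
     ((l + 2) / 6 * (3 * (a * b * c) - (a * b + b * c + c * a) / 3)
      + (2 * l + 1) / (6 * l ^ 2) * (3 * (a' * b' * c') - (a' * b' + b' * c' + c' * a') / 3))).
  { unfold a', b', c'. replace c with (1 - a - b) by lra. field. lra. }
  assert (hneg : (l + 2) / 6 * (3 * (a * b * c) - (a * b + b * c + c * a) / 3)
      + (2 * l + 1) / (6 * l ^ 2) * (3 * (a' * b' * c') - (a' * b' + b' * c' + c' * a') / 3) < 0).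
  { assert (0 < (l + 2) / 6) by (apply Rdiv_lt_0_compat; lra).
    assert (0 < (2 * l + 1) / (6 * l ^ 2)) by (apply Rdiv_lt_0_compat; [lra|]; pose proof (pow_lt l 2 hl); lra).
    nra. }
  rewrite hprod, Rminus_diag_eq in K at 1 by reflexivity.
  symmetry in K. apply Rmult_integral in K as [|]; lra.
Qed.

Lemma same_ray_same_product x y : in_interior3 x -> in_interior3 y -> ~ is_center3 x ->
  y 0%nat * y 1%nat * y 2%nat = x 0%nat * x 1%nat * x 2%nat ->
  (3 * y 0%nat - 1) * (x 1%nat - x 2%nat) - (y 1%nat - y 2%nat) * (3 * x 0%nat - 1) = 0 ->
  0 < (3 * y 0%nat - 1) * (3 * x 0%nat - 1) + (y 1%nat - y 2%nat) * (x 1%nat - x 2%nat) ->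
  forall i, (i < 3)%nat -> y i = x i.
Proof.
  intros [x0 [x1 [x2 xs]]] [y0 [y1 [y2 ys]]] hn hprod hcross hdot.
  destruct (codirectional_multiple (3 * x 0%nat - 1) (x 1%nat - x 2%nat) (3 * y 0%nat - 1)
    (y 1%nat - y 2%nat) (centered_radius_pos x xs hn) hcross hdot) as [l [hl [e1 e2]]].
  assert (ea : y 0%nat = 1/3 + l * (x 0%nat - 1/3)) by lra.
  assert (l * x 0%nat + l * x 1%nat + l * x 2%nat = l) by (rewrite <- Rmult_plus_distr_l, <- Rmult_plus_distr_l, xs; ring).
  assert (eb : y 1%nat = 1/3 + l * (x 1%nat - 1/3)) by lra.
  assert (ec : y 2%nat = 1/3 + l * (x 2%nat - 1/3)) by lra.
  assert (l = 1).
  { apply (product_injective_on_ray (x 0%nat) (x 1%nat) (x 2%nat)); auto; congruence. }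
  subst l. intros i hi. destruct i as [|[|[|i]]]; [lra|lra|lra|lia].
Qed.

Lemma angular_velocity_aux x y z m : 0 < m -> m <= x -> m <= y -> m <= z -> x + y + z = 1 ->
  m * ((y - z) ^ 2 + (3 * x - 1) ^ 2) <= (y - z) ^ 2 * (9 * x - 1) + (1 - x) * (3 * x - 1) ^ 2.
Proof.
  intros. destruct (Rle_dec 0 (9 * x - 1 - m)).
  - assert (0 <= (y - z) ^ 2 * (9 * x - 1 - m)) by (apply Rmult_le_pos; [apply pow2_ge_0|lra]).
    assert (0 <= (3 * x - 1) ^ 2 * (1 - x - m)) by (apply Rmult_le_pos; [apply pow2_ge_0|lra]). nra.
  - assert ((y - z) ^ 2 <= (1 - x - 2 * m) ^ 2) by nra.
    assert ((1 + m - 9 * x) * (1 - x - 2 * m) ^ 2 <= (3 * x - 1) ^ 2 * (1 - x - m)).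
    { assert (0 <= x - m) by lra. assert (0 <= 1 + m - 9 * x) by lra. nra. }
    nra.
Qed.

(* In the centered coordinates (3x - 1, y - z) the RPS flow turns around the
   barycenter with angular momentum at least (xyz / 3) times the squared radius:
   each coordinate is at least xyz, and the common factor is at least 2/3. *)
Lemma angular_momentum_lower x y z m : 0 < x -> 0 < y -> 0 < z -> x + y + z = 1 -> x * y * z = m ->
  m / 3 * ((3 * x - 1) * (3 * x - 1) + (y - z) * (y - z)) <=
  (3 * x - 1) * (y * (x - z) * (x*x + y*y + z*z + x*y + y*z + z*x)
                 - z * (y - x) * (x*x + y*y + z*z + x*y + y*z + z*x))
  - (y - z) * (3 * (x * (z - y) * (x*x + y*y + z*z + x*y + y*z + z*x))).
Proof.
  intros hx hy hz hsum hp.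
  assert (hm : 0 < m) by (rewrite <- hp; apply Rmult_lt_0_compat; nra).
  assert (m <= x) by (rewrite <- hp; assert (y * z <= 1) by nra; assert (0 < y * z) by nra; nra).
  assert (m <= y) by (rewrite <- hp; assert (x * z <= 1) by nra; assert (0 < x * z) by nra; nra).
  assert (m <= z) by (rewrite <- hp; assert (x * y <= 1) by nra; assert (0 < x * y) by nra; nra).
  set (Q := x*x + y*y + z*z + x*y + y*z + z*x).
  assert (hq : 2 / 3 <= Q).
  { unfold Q. replace z with (1 - x - y) by lra.
    pose proof (pow2_ge_0 (x - y)). pose proof (pow2_ge_0 (x + y - 2 / 3)). nra. }
  pose proof (angular_velocity_aux x y z m hm ltac:(lra) ltac:(lra) ltac:(lra) hsum).
  replace ((3 * x - 1) * (y * (x - z) * Q - z * (y - x) * Q) - (y - z) * (3 * (x * (z - y) * Q)))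
    with (Q * ((y - z) ^ 2 * (9 * x - 1) + (1 - x) * (3 * x - 1) ^ 2) / 2)
    by (unfold Q; replace z with (1 - x - y) by lra; field).
  set (R2 := (y - z) ^ 2 + (3 * x - 1) ^ 2) in *.
  set (P := (y - z) ^ 2 * (9 * x - 1) + (1 - x) * (3 * x - 1) ^ 2) in *.
  replace ((3 * x - 1) * (3 * x - 1) + (y - z) * (y - z)) with R2 by (unfold R2; ring).
  assert (0 <= R2) by (unfold R2; pose proof (pow2_ge_0 (y - z)); pose proof (pow2_ge_0 (3 * x - 1)); lra).
  assert (0 <= m * R2) by (apply Rmult_le_pos; lra).
  assert (0 <= (Q - 2 / 3) * P) by (apply Rmult_le_pos; lra).
  lra.
Qed.

Section Winding.
Variable phi : R -> nat -> R.
Hypothesis hs : is_solution3 rps_field phi.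
Hypothesis hint : forall t, in_interior3 (phi t).
Hypothesis hnc : forall t, ~ is_center3 (phi t).

Definition cx (t : R) : R := 3 * phi t 0%nat - 1.
Definition cy (t : R) : R := phi t 1%nat - phi t 2%nat.
Definition dcx (t : R) : R := 3 * rps_field (phi t) 0%nat.
Definition dcy (t : R) : R := rps_field (phi t) 1%nat - rps_field (phi t) 2%nat.
Definition radius2 (t : R) : R := cx t * cx t + cy t * cy t.
Definition ang_vel (t : R) : R := (cx t * dcy t - cy t * dcx t) / radius2 t.
Definition angle (t : R) : R := RInt ang_vel 0 t.

Local Ltac poly_deriv :=
  repeat first [ apply deriv_const | (apply hs; lia)
               | eapply deriv_minus | eapply deriv_plus | eapply deriv_mult ].

Lemma radius2_pos t : 0 < radius2 t.
Proof.
  destruct (hint t) as [_ [_ [_ hsum]]]. pose proof (centered_radius_pos _ hsum (hnc t)).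
  unfold radius2, cx, cy. simpl in *. lra.
Qed.

Lemma cx_deriv t : derivable_pt_lim cx t (dcx t).
Proof. unfold cx, dcx. eapply deriv_eq; [poly_deriv|cbv beta; ring]. Qed.

Lemma cy_deriv t : derivable_pt_lim cy t (dcy t).
Proof. unfold cy, dcy. eapply deriv_eq; [poly_deriv|cbv beta; ring]. Qed.

Lemma radius2_deriv t : derivable_pt_lim radius2 t (dcx t * cx t + cx t * dcx t + (dcy t * cy t + cy t * dcy t)).
Proof. unfold radius2. apply deriv_plus; apply deriv_mult; auto using cx_deriv, cy_deriv. Qed.

Lemma ang_vel_continuous t : continuous ang_vel t.
Proof.
  pose proof (radius2_pos t). eapply deriv_continuous.
  unfold ang_vel, dcy, dcx, rps_field, rps_quad. unfold radius2, cx, cy in *.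
  apply deriv_div; [poly_deriv|poly_deriv|lra].
Qed.

Lemma angle_deriv t : derivable_pt_lim angle t (ang_vel t).
Proof. apply RInt_deriv, ang_vel_continuous. Qed.

Lemma angle_0 : angle 0 = 0.
Proof. unfold angle. now rewrite RInt_point. Qed.

(* The centered state rotated back by the accumulated angle. *)
Definition unwound1 (t : R) : R := cx t * cos (angle t) + cy t * sin (angle t).
Definition unwound2 (t : R) : R := cy t * cos (angle t) - cx t * sin (angle t).

Lemma cos_angle_deriv t : derivable_pt_lim (fun t => cos (angle t)) t (ang_vel t * - sin (angle t)).
Proof. exact (deriv_comp cos angle t _ _ (derivable_pt_lim_cos _) (angle_deriv t)). Qed.

Lemma sin_angle_deriv t : derivable_pt_lim (fun t => sin (angle t)) t (ang_vel t * cos (angle t)).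
Proof. exact (deriv_comp sin angle t _ _ (derivable_pt_lim_sin _) (angle_deriv t)). Qed.

(* Since the angle absorbs all rotation, the unwound vector only moves radially:
   for every fixed linear form P, P(unwound)^2 / radius^2 is constant. *)
Lemma unwound_projection_const c1 c2 t :
  (c1 * unwound1 t + c2 * unwound2 t) ^ 2 / radius2 t
  = (c1 * unwound1 0 + c2 * unwound2 0) ^ 2 / radius2 0.
Proof.
  apply (deriv_zero_const (fun t => (c1 * unwound1 t + c2 * unwound2 t) ^ 2 / radius2 t)).
  intro s. pose proof (radius2_pos s). eapply deriv_eq.
  - apply deriv_div; [|apply radius2_deriv|lra].
    apply (deriv_comp (fun y => y ^ 2)); [apply derivable_pt_lim_pow|].
    apply deriv_plus; apply deriv_mult; try apply deriv_const; unfold unwound1, unwound2.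
    + apply deriv_plus; apply deriv_mult; auto using cx_deriv, cy_deriv, cos_angle_deriv, sin_angle_deriv.
    + apply deriv_minus; apply deriv_mult; auto using cx_deriv, cy_deriv, cos_angle_deriv, sin_angle_deriv.
  - cbv beta. unfold unwound1, unwound2, ang_vel, radius2 in *. simpl. field. lra.
Qed.

Lemma unwound_0 : unwound1 0 = cx 0 /\ unwound2 0 = cy 0.
Proof. unfold unwound1, unwound2. rewrite angle_0, cos_0, sin_0. split; ring. Qed.

Lemma unwound_cross_zero t : unwound1 t * cy 0 - unwound2 t * cx 0 = 0.
Proof.
  pose proof (unwound_projection_const (cy 0) (- cx 0) t) as E.
  destruct unwound_0 as [e1 e2]. rewrite e1, e2 in E. pose proof (radius2_pos t).
  replace ((cy 0 * cx 0 + - cx 0 * cy 0) ^ 2 / radius2 0) with 0 in E by (unfold Rdiv; ring).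
  replace (cy 0 * unwound1 t + - cx 0 * unwound2 t) with (unwound1 t * cy 0 - unwound2 t * cx 0) in E by ring.
  set (z := unwound1 t * cy 0 - unwound2 t * cx 0) in *.
  assert (z ^ 2 = 0) by (replace (z ^ 2) with (z ^ 2 / radius2 t * radius2 t) by (field; lra); rewrite E; ring).
  nra.
Qed.

Lemma unwound_dot_pos t : 0 < unwound1 t * cx 0 + unwound2 t * cy 0.
Proof.
  pose proof (radius2_pos 0).
  assert (h0 : unwound1 0 * cx 0 + unwound2 0 * cy 0 = radius2 0)
    by (destruct unwound_0 as [-> ->]; unfold radius2; ring).
  apply (never_zero_stays_pos (fun t => unwound1 t * cx 0 + unwound2 t * cy 0)).
  - intro s. eapply deriv_continuity_pt. unfold unwound1, unwound2.
    apply deriv_plus; apply deriv_mult; try apply deriv_const.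
    + apply deriv_plus; apply deriv_mult; auto using cx_deriv, cy_deriv, cos_angle_deriv, sin_angle_deriv.
    + apply deriv_minus; apply deriv_mult; auto using cx_deriv, cy_deriv, cos_angle_deriv, sin_angle_deriv.
  - lra.
  - intros s e. pose proof (unwound_projection_const (cx 0) (cy 0) s) as E.
    rewrite (Rmult_comm (cx 0)), (Rmult_comm (cy 0)), e in E.
    rewrite (Rmult_comm (cx 0)), (Rmult_comm (cy 0)), h0 in E.
    replace (0 ^ 2 / radius2 s) with 0 in E by (unfold Rdiv; ring).
    replace (radius2 0 ^ 2 / radius2 0) with (radius2 0) in E by (field; lra). lra.
Qed.

(* The angular velocity is at least xyz / 3 (a conserved positive quantity). *)
Lemma ang_vel_lower t : phi 0 0%nat * phi 0 1%nat * phi 0 2%nat / 3 <= ang_vel t.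
Proof.
  pose proof (solution_product_invariant _ _ rps_field_product hs t) as hp.
  destruct (hint t) as [h0 [h1 [h2 h3]]]. pose proof (radius2_pos t).
  pose proof (angular_momentum_lower _ _ _ _ h0 h1 h2 h3 hp) as A.
  unfold ang_vel. apply (Rmult_le_reg_r (radius2 t)); auto.
  replace ((cx t * dcy t - cy t * dcx t) / radius2 t * radius2 t) with (cx t * dcy t - cy t * dcx t)
    by (field; lra).
  unfold radius2, cx, cy, dcx, dcy, rps_field, rps_quad. exact A.
Qed.

(* So the accumulated angle reaches 2 pi in finite time, where the unwound
   vector coincides with the actual one: the state is back on its initial ray. *)
Lemma returns_to_initial_ray :
  exists T, 0 < T /\ cx T * cy 0 - cy T * cx 0 = 0 /\ 0 < cx T * cx 0 + cy T * cy 0.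
Proof.
  set (m := phi 0 0%nat * phi 0 1%nat * phi 0 2%nat).
  assert (hm : 0 < m) by (destruct (hint 0) as [h0 [h1 [h2 _]]]; unfold m; apply Rmult_lt_0_compat; nra).
  pose proof PI_RGT_0. set (T1 := 6 * PI / m).
  assert (hT1 : 0 <= T1) by (unfold T1; apply Rlt_le, Rdiv_lt_0_compat; lra).
  assert (hturn : 2 * PI <= angle T1).
  { unfold angle.
    assert (E := RInt_le (fun _ => m / 3) ang_vel 0 T1 hT1 (continuous_ex_RInt _ _ _ (fun _ => continuous_const _ _))
      (continuous_ex_RInt _ _ _ ang_vel_continuous) (fun s _ => ang_vel_lower s)).
    rewrite RInt_const in E. change (scal ?a ?b) with (a * b) in E.
    replace ((T1 - 0) * (m / 3)) with (2 * PI) in E by (unfold T1; field; lra). exact E. }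
  destruct (IVT_gen angle 0 T1 (2 * PI) (fun s => deriv_continuity_pt _ _ _ (angle_deriv s))) as [T [hT eT]].
  { rewrite angle_0. unfold Rmin, Rmax. destruct (Rle_dec 0 (angle T1)); lra. }
  rewrite Rmin_left, Rmax_right in hT by lra.
  assert (T <> 0) by (intro e; rewrite e, angle_0 in eT; lra).
  pose proof (unwound_cross_zero T). pose proof (unwound_dot_pos T).
  unfold unwound1, unwound2 in *. rewrite eT, cos_2PI, sin_2PI in *.
  exists T. split; [lra|split; lra].
Qed.
End Winding.

Lemma ibr_rps_solution a b phi : 0 < a -> 0 < b ->
  is_solution3 (ibr 3 (rps a b)) phi <-> is_solution3 rps_field phi.
Proof. intros ha hb. split; intros h t i hi; [rewrite <- (ibr_rps a b)|rewrite ibr_rps]; auto. Qed.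

Lemma solution_shift F phi T : is_solution3 F phi -> is_solution3 F (fun t => phi (t + T)).
Proof.
  intros hs t i hi. eapply deriv_eq.
  - apply (deriv_comp (fun s => phi s i) (fun s => s + T) t (F (phi (t + T)) i) 1); [apply hs, hi|].
    eapply deriv_eq; [apply deriv_plus; [apply deriv_id|apply deriv_const]|ring].
  - ring.
Qed.

Lemma constant_solution_rest_point F phi : is_solution3 F phi ->
  (forall t i, (i < 3)%nat -> phi t i = phi 0 i) -> forall i, (i < 3)%nat -> F (phi 0) i = 0.
Proof.
  intros hs hconst i hi.
  apply (uniqueness_limite (fun s => phi s i) 0); [apply hs, hi|].
  apply (deriv_ext (fun _ => phi 0 i)); [intro s; symmetry; now apply hconst|apply deriv_const].
Qed.

(* Periodicity: after one full turn the solution is back on its initial ray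
   with the same product xyz, hence at its initial state; uniqueness then
   makes the time-shifted solution equal to the original one. *)
Lemma rps_periodic phi : is_solution3 rps_field phi -> in_interior3 (phi 0) -> ~ is_center3 (phi 0) ->
  exists T, 0 < T /\ forall t i, (i < 3)%nat -> phi (t + T) i = phi t i.
Proof.
  intros hs hint0 hnc0.
  pose proof (rps_interior_invariant phi hs hint0) as hint.
  pose proof (rps_center_unreachable phi hs hint hnc0) as hnc.
  destruct (returns_to_initial_ray phi hs hint hnc) as [T [hT [hcross hdot]]].
  assert (hback : forall i, (i < 3)%nat -> phi T i = phi 0 i).
  { apply same_ray_same_product; auto.
    exact (solution_product_invariant _ _ rps_field_product hs T). }
  exists T. split; [exact hT|].
  intros t i hi.
  apply (rps_solution_unique (fun t => phi (t + T)) phi (solution_shift _ _ T hs) hs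
    (fun s => interior_unit_box _ (hint (s + T))) (fun s => interior_unit_box _ (hint s)) 0); auto.
  intros j hj. rewrite Rplus_0_l. now apply hback.
Qed.

Theorem proposition4 (a b : R) (ha : 0 < a) (hb : 0 < b) :
  (* the IBR dynamics for A has the stated explicit form on Delta *)
  (forall x : nat -> R, in_simplex3 x ->
     let '(p, q, r) := (x 0%nat, x 1%nat, x 2%nat) in
     ibr 3 (rps a b) x 0%nat = p * (r - q) * (1 - p*q - p*r - q*r) /\
     ibr 3 (rps a b) x 1%nat = q * (p - r) * (1 - p*q - p*r - q*r) /\
     ibr 3 (rps a b) x 2%nat = r * (q - p) * (1 - p*q - p*r - q*r)) /\
  (* the unique interior rest point is (1/3,1/3,1/3) *)
  (forall x : nat -> R, in_interior3 x ->
     ((forall i : nat, (i < 3)%nat -> ibr 3 (rps a b) x i = 0) <-> is_center3 x)) /\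
  (* every solution from an interior non-center state is a nonconstant periodic orbit *)
  (forall x0 : nat -> R, in_interior3 x0 -> ~ is_center3 x0 ->
     (exists phi : R -> nat -> R,
        is_solution3 (ibr 3 (rps a b)) phi /\
        forall i : nat, (i < 3)%nat -> phi 0 i = x0 i) /\
     (forall phi : R -> nat -> R,
        is_solution3 (ibr 3 (rps a b)) phi ->
        (forall i : nat, (i < 3)%nat -> phi 0 i = x0 i) ->
        (exists T : R, 0 < T /\
           forall (t : R) (i : nat), (i < 3)%nat -> phi (t + T) i = phi t i) /\
        (exists (t : R) (i : nat), (i < 3)%nat /\ phi t i <> x0 i))).
Proof.
  split; [now apply ibr_rps_explicit|]. split; [now apply ibr_rps_rest_point|].
  intros x0 hx hnc. split.
  - destruct (rps_solution_exists x0 hx) as [phi [hs hinit]].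
    exists phi. split; [now apply (ibr_rps_solution a b)|exact hinit].
  - intros phi hsol hinit. apply (ibr_rps_solution a b phi ha hb) in hsol.
    assert (hphi0 : forall i, (i < 3)%nat -> x0 i = phi 0 i) by (intros; symmetry; auto).
    assert (hint0 : in_interior3 (phi 0)) by (unfold in_interior3 in *; rewrite <- !hphi0 by lia; auto).
    assert (hnc0 : ~ is_center3 (phi 0)) by (unfold is_center3 in *; rewrite <- !hphi0 by lia; auto).
    split; [exact (rps_periodic phi hsol hint0 hnc0)|].
    (* a constant solution would start at a rest point, i.e. at the barycenter *)
    apply NNPP. intro hconst. apply hnc0, (ibr_rps_rest_point a b ha hb _ hint0).
    intros i hi. rewrite ibr_rps by auto. apply (constant_solution_rest_point _ _ hsol); auto.
    intros t j hj. rewrite <- hphi0 by auto.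
    destruct (Req_dec (phi t j) (x0 j)) as [e|e]; [exact e|exfalso; apply hconst; eauto].
Qed.
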